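(* Let $r\in\mathfrak{b}$ have pairwise distinct diagonal entries and let $b_{11},\dots,b_{nn}\in\mathbb{C}^*$. Then $b=\sum_{\iota=1}^nE_{\iota\iota}\operatorname{diag}(b_{11},\dots,b_{nn})L^\iota(r)$ is an invertible upper triangular matrix with diagonal entries $b_{11},\dots,b_{nn}$, and $brb^{-1}=\operatorname{diag}(r_{11},\dots,r_{nn})$. Explicitly, $b_{\iota\gamma}=0$ for $\iota>\gamma$ and for $\iota<\gamma$ $$b_{\iota\gamma}=b_{\iota\iota}\Big(\frac{r_{\iota\gamma}}{r_{\iota\iota}-r_{\gamma\gamma}}+\sum_{v=1}^{\gamma-\iota-1}\sum_{\iota<k_1<\dots<k_v<\gamma}\frac{r_{\iota k_1}r_{k_v\gamma}}{(r_{\iota\iota}-r_{k_1k_1})(r_{\iota\iota}-r_{\gamma\gamma})}\prod_{u=1}^{v-1}\frac{r_{k_uk_{u+1}}}{r_{\iota\iota}-r_{k_{u+1}k_{u+1}}}\Big).$$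
   Context: $\mathfrak{b}$ is the space of upper triangular complex $n\times n$ matrices; $E_{\iota\iota}$ is the matrix unit with $1$ in position $(\iota,\iota)$. $L^\iota(r)=\big[\operatorname{tr}\prod_{k\ne\iota}(r-r_{kk}I)\big]^{-1}\prod_{k\ne\iota}(r-r_{kk}I)$. Empty sums are $0$ and empty products are $1$. *)

(* C = R[i] with R : realType is the complex field. *)
From HB Require Import structures.
From mathcomp Require Import all_boot all_order all_algebra.
From mathcomp Require Import reals complex.
Set Implicit Arguments. Unset Strict Implicit. Unset Printing Implicit Defensive.
Import Order.TTheory GRing.Theory Num.Theory.
Local Open Scope ring_scope.

Definition upper_tri (K : pzRingType) n (A : 'M[K]_n) : Prop :=
  forall i j : 'I_n, (j < i)%N -> A i j = 0.

Definition Lprod (K : fieldType) n (r : 'M[K]_n) (i : 'I_n) : 'M[K]_n :=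
  \big[mulmx/1%:M]_(k < n | k != i) (r - (r k k)%:M).

Definition Lmat (K : fieldType) n (r : 'M[K]_n) (i : 'I_n) : 'M[K]_n :=
  (\tr (Lprod r i))^-1 *: Lprod r i.

Definition bmat (K : fieldType) n (r : 'M[K]_n) (bd : 'I_n -> K) : 'M[K]_n :=
  \sum_(i < n) (delta_mx i i *m diag_mx (\row_j bd j) *m Lmat r i).

(* the summand for a chain i < k_1 < ... < k_v < j, k_u = nth i k (u-1) *)
Definition chain_term (K : fieldType) n (r : 'M[K]_n) (i j : 'I_n) (v : nat)
  (k : v.-tuple 'I_n) : K :=
  let kk u := nth i k u in
  r i (kk 0%N) * r (kk v.-1) j / ((r i i - r (kk 0%N) (kk 0%N)) * (r i i - r j j))
  * \prod_(0 <= u < v.-1) (r (kk u) (kk u.+1) / (r i i - r (kk u.+1) (kk u.+1))).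

Definition chain_between n (i j : 'I_n) (v : nat) (k : v.-tuple 'I_n) : bool :=
  sorted ltn (map val k) && all (fun x : 'I_n => (i < x < j)%N) k.

Definition b_formula (K : fieldType) n (r : 'M[K]_n) (bd : 'I_n -> K) (i j : 'I_n) : K :=
  bd i * (r i j / (r i i - r j j)
    + \sum_(1 <= v < (j - i)%N) \sum_(k : v.-tuple 'I_n | chain_between i j k)
        chain_term r i j k).

From HB Require Import structures.
From mathcomp Require Import all_boot all_order all_algebra.
From mathcomp Require Import reals complex.
From mathcomp Require Import ring zify.
Import Order.TTheory GRing.Theory Num.Theory.
Set Implicit Arguments. Unset Strict Implicit. Unset Printing Implicit Defensive.
Local Open Scope ring_scope.

(* By Cayley-Hamilton for the triangular matrix r, the product over k <> i of
   (r - r_kk) kills r - r_ii, so every row of L^i(r) is a left eigenvector of r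
   for r_ii.  L^i(r) is upper triangular, its diagonal vanishes except at (i,i),
   and the trace normalisation makes that entry 1.  Row i of b is b_ii times row
   i of L^i(r), hence b is upper triangular with diagonal b_11..b_nn and
   b r = diag(r_11..r_nn) b.  For x the i-th row of L^i(r), the equation
   x r = r_ii x reads (r_ii - r_ll) x_l = r_il + sum_(i<k<l) x_k r_kl; unfolding
   this recursion writes x_l as a sum over the chains i < k_1 < ... < k_v < l of
   the products of the edge weights r_ab / (r_ii - r_bb) along the chain. *)

Section UpperTriangular.
Variables (R : pzRingType) (n : nat).
Implicit Types A B : 'M[R]_n.

Lemma upper_tri_scalar (a : R) : upper_tri (a%:M : 'M_n).
Proof. by move=> i j ji; rewrite mxE -val_eqE (gtn_eqF ji) mulr0n. Qed.

Lemma upper_triB A B : upper_tri A -> upper_tri B -> upper_tri (A - B).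
Proof. by move=> hA hB i j ji; rewrite !mxE hA ?hB ?subr0. Qed.

Lemma upper_tri_mulmx A B : upper_tri A -> upper_tri B -> upper_tri (A *m B).
Proof.
move=> hA hB i j ji; rewrite mxE big1 // => k _.
case: (ltnP k i) => [ki|ik]; first by rewrite hA ?mul0r.
by rewrite hB ?mulr0 // (leq_trans ji ik).
Qed.

Lemma mulmx_upper_tri_diag A B i : upper_tri A -> upper_tri B ->
  (A *m B) i i = A i i * B i i.
Proof.
move=> hA hB; rewrite mxE (bigD1 i) //= big1 ?addr0 // => k /negPf ki.
case: (ltngtP k i) => [ki'|ik|/val_inj e]; first by rewrite hA ?mul0r.
  by rewrite hB ?mulr0.
by rewrite e eqxx in ki.
Qed.

Lemma upper_tri_big_mulmx I (s : seq I) (P : pred I) (F : I -> 'M[R]_n) :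
  (forall k, P k -> upper_tri (F k)) ->
  upper_tri (\big[mulmx/1%:M]_(k <- s | P k) F k).
Proof.
move=> hF; apply: big_ind => [||k /hF //]; first exact: upper_tri_scalar.
exact: upper_tri_mulmx.
Qed.

Lemma big_mulmx_upper_tri_diag I (s : seq I) (P : pred I) (F : I -> 'M[R]_n) i :
  (forall k, P k -> upper_tri (F k)) ->
  (\big[mulmx/1%:M]_(k <- s | P k) F k) i i = \prod_(k <- s | P k) F k i i.
Proof.
move=> hF; elim: s => [|k s IH]; first by rewrite !big_nil mxE eqxx.
rewrite !big_cons; case: ifP => // Pk.
rewrite mulmx_upper_tri_diag ?IH //; [exact: hF | exact: upper_tri_big_mulmx].
Qed.

Lemma upper_tri_trmx A : upper_tri A -> is_trig_mx A^T.
Proof. by move=> hA; apply/is_trig_mxP => i j ij; rewrite mxE hA. Qed.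

End UpperTriangular.

Lemma det_upper_tri (R : comPzRingType) n (A : 'M[R]_n) :
  upper_tri A -> \det A = \prod_i A i i.
Proof.
move=> /upper_tri_trmx hA; rewrite -det_tr det_trig //.
by apply: eq_bigr => i _; rewrite mxE.
Qed.

Lemma char_poly_trmx (R : comNzRingType) n (A : 'M[R]_n) :
  char_poly A^T = char_poly A.
Proof.
rewrite /char_poly -det_tr; congr (\det _); apply/matrixP => i j.
by rewrite !mxE eq_sym.
Qed.

Lemma char_poly_upper_tri (R : comNzRingType) n (A : 'M[R]_n) :
  upper_tri A -> char_poly A = \prod_i ('X - (A i i)%:P).
Proof.
move=> /upper_tri_trmx hA; rewrite -char_poly_trmx char_poly_trig //.
by apply: eq_bigr => i _; rewrite mxE.
Qed.

Section LagrangeRows.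
Variables (K : fieldType) (n : nat) (r : 'M[K]_n).
Hypothesis hr : upper_tri r.

Lemma upper_tri_Lprod i : upper_tri (Lprod r i).
Proof.
by apply: upper_tri_big_mulmx => k _; apply: upper_triB => //; apply: upper_tri_scalar.
Qed.

Lemma Lprod_diag i j : Lprod r i j j = \prod_(k < n | k != i) (r j j - r k k).
Proof.
rewrite big_mulmx_upper_tri_diag => [|k _]; last first.
  by apply: upper_triB => //; apply: upper_tri_scalar.
by apply: eq_bigr => k _; rewrite !mxE eqxx mulr1n.
Qed.

Lemma mxtrace_Lprod i : \tr (Lprod r i) = Lprod r i i i.
Proof.
rewrite /mxtrace (bigD1 i) //= big1 ?addr0 // => j ji.
by rewrite Lprod_diag (bigD1 j) //= subrr mul0r.
Qed.

Lemma Lprod_mulmx_sub i : Lprod r i *m (r - (r i i)%:M) = 0.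
Proof.
case: n r i hr => [|m] A i hA; first by case: i.
have := Cayley_Hamilton A; rewrite char_poly_upper_tri // (bigD1 i) //= mulrC.
rewrite rmorphM rmorph_prod /= => <-; rewrite mulmxE.
by congr (_ * _); [apply: eq_bigr => k _ |]; rewrite rmorphB /= horner_mx_X horner_mx_C.
Qed.

Lemma upper_tri_Lmat i : upper_tri (Lmat r i).
Proof. by move=> a c ca; rewrite mxE upper_tri_Lprod ?mulr0. Qed.

Lemma Lmat_mulmx i : Lmat r i *m r = r i i *: Lmat r i.
Proof.
have /eqP := Lprod_mulmx_sub i.
rewrite mulmxBr mul_mx_scalar subr_eq0 => /eqP hL.
by rewrite /Lmat -scalemxAl hL !scalerA mulrC.
Qed.

Hypothesis hdist : forall k l : 'I_n, k != l -> r k k != r l l.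

Lemma Lmat_diag i : Lmat r i i i = 1.
Proof.
rewrite mxE mxtrace_Lprod mulVf // Lprod_diag.
by apply/prodf_neq0 => k ki; rewrite subr_eq0 hdist // eq_sym.
Qed.

End LagrangeRows.

Lemma rcons_belast_tupleE T m (t : m.+1.-tuple T) :
  t = [tuple of rcons [tuple of belast (thead t) (behead t)] (last (thead t) (behead t))].
Proof. by apply: val_inj; rewrite /= -lastI [in LHS](tuple_eta t). Qed.

Lemma sum_ord_between (V : nmodType) n (F : 'I_n -> V) (i l : 'I_n) :
  (i < l)%N -> (forall j : 'I_n, (j < i)%N || (l < j)%N -> F j = 0) ->
  \sum_j F j = F i + \sum_(j : 'I_n | (i < j < l)%N) F j + F l.
Proof.
move=> il F0; have li : l != i by rewrite neq_ltn il orbT.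
rewrite (bigD1 i) //= (bigD1 l) //= -addrA; congr (_ + _); rewrite addrC; congr (_ + _).
rewrite [LHS]big_mkcond [RHS]big_mkcond; apply: eq_bigr => j _ /=.
rewrite -!val_eqE /=; case: (ltngtP j i) => ji //=.
  by rewrite F0 ?ji // if_same.
by case: (ltngtP j l) => jl //; rewrite F0 // jl orbT.
Qed.

Section Chains.
Variables (K : fieldType) (n : nat) (r : 'M[K]_n).
Implicit Types i j k l : 'I_n.

(* For v > 0 this is chain_term; for v = 0 it is
   r_il / (r_ii - r_ll), whereas chain_term then divides by r_ii - r_ii = 0. *)
Definition path_weight i (s : seq 'I_n) l : K :=
  \prod_(e <- zip (i :: s) (rcons s l)) (r e.1 e.2 / (r i i - r e.2 e.2)).

Lemma path_weight_nil i l : path_weight i [::] l = r i l / (r i i - r l l).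
Proof. by rewrite /path_weight big_seq1. Qed.

Lemma path_weight_rcons i s k l :
  path_weight i (rcons s k) l = path_weight i s k * (r k l / (r i i - r l l)).
Proof.
by rewrite /path_weight -rcons_cons zip_rcons ?size_rcons // big_rcons.
Qed.

Lemma chain_term_rcons i l v (t : v.+1.-tuple 'I_n) k :
  chain_term r i l [tuple of rcons t k] = chain_term r i k t * (r k l / (r i i - r l l)).
Proof.
have st : size t = v.+1 by rewrite size_tuple.
rewrite /chain_term /= big_nat_recr //= !nth_rcons st ltnS leqnn ltnn eqxx.
rewrite (@eq_big_nat _ _ _ 0 v _
  (fun u => r (nth i t u) (nth i t u.+1) / (r i i - r (nth i t u.+1) (nth i t u.+1)))).
  by rewrite !invfM; ring.
by move=> u /andP[_ uv]; rewrite !nth_rcons st ltnS (ltnW uv) ltnS uv.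
Qed.

Lemma chain_termE i l v (t : v.+1.-tuple 'I_n) : chain_term r i l t = path_weight i t l.
Proof.
elim: v t l => [|v IH] t l.
  case/tupleP: t => k t0; rewrite tuple0 /chain_term /= big_geq // mulr1.
  rewrite -[[:: k]]/(rcons [::] k) path_weight_rcons path_weight_nil.
  by rewrite invfM; ring.
by rewrite [t]rcons_belast_tupleE chain_term_rcons IH path_weight_rcons.
Qed.

Lemma chain_between_rcons i l v (t : v.-tuple 'I_n) k :
  chain_between i l [tuple of rcons t k] = (i < k < l)%N && chain_between i k t.
Proof.
rewrite /chain_between /= map_rcons all_rcons (sorted_pairwise ltn_trans).
rewrite pairwise_rcons -(sorted_pairwise ltn_trans) all_map.
case/boolP: (i < k < l)%N => [/andP[ik kl]|_]; last by rewrite !andbF.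
rewrite /= -andbA andbCA; congr (_ && _); rewrite -all_predI; apply: eq_all => x /=.
by case: (ltnP x k) => xk; rewrite ?andbF //= (ltn_trans xk kl) andbT.
Qed.

Lemma chain_between_size i l v (t : v.-tuple 'I_n) :
  chain_between i l t -> (v <= l - i.+1)%N.
Proof.
move=> /andP[sorted_t /allP t_between].
rewrite -(size_tuple t) -(size_map val) -(size_iota i.+1 (l - i.+1)).
rewrite -/(index_iota i.+1 l).
apply: uniq_leq_size => [|_ /mapP[k kt ->]].
  exact: (sorted_uniq ltn_trans ltnn sorted_t).
by rewrite mem_index_iota; apply: t_between.
Qed.

Definition chain_sum i l v : K :=
  \sum_(t : v.-tuple 'I_n | chain_between i l t) path_weight i t l.

Definition chain_coef i l : K := \sum_(0 <= v < l - i) chain_sum i l v.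

Lemma chain_sum0 i l : chain_sum i l 0 = r i l / (r i i - r l l).
Proof.
rewrite /chain_sum (eq_bigl (pred1 [tuple])) ?big_pred1_eq ?path_weight_nil // => t.
by rewrite tuple0; apply/esym/eqP.
Qed.

Lemma chain_sumS i l v : chain_sum i l v.+1 =
  \sum_(k : 'I_n | (i < k < l)%N) chain_sum i k v * (r k l / (r i i - r l l)).
Proof.
pose split_last (t : v.+1.-tuple 'I_n) :=
  (last (thead t) (behead t), [tuple of belast (thead t) (behead t)]).
rewrite /chain_sum
  (reindex (fun p : 'I_n * v.-tuple 'I_n => [tuple of rcons p.2 p.1])) /=; last first.
  exists split_last => [[k t] _ | t _]; last by rewrite -rcons_belast_tupleE.
  have /(congr1 val) := tuple_eta [tuple of rcons t k].
  rewrite /= lastI => /rcons_inj[belast_t last_k].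
  by rewrite /split_last; congr (_, _); last apply: val_inj.
under eq_bigl do rewrite chain_between_rcons.
rewrite -(pair_big_dep (fun k : 'I_n => i < k < l)%N
  (fun k (t : v.-tuple 'I_n) => chain_between i k t)
  (fun k (t : v.-tuple 'I_n) => path_weight i (rcons t k) l)) /=.
by apply: eq_bigr => k _; rewrite big_distrl; apply: eq_bigr => t _; rewrite path_weight_rcons.
Qed.

Lemma chain_sum_eq0 i l v : (i < l)%N -> (l - i <= v)%N -> chain_sum i l v = 0.
Proof. by move=> il lv; apply: big1 => t /chain_between_size; lia. Qed.

Lemma chain_coef_rec i l : (i < l)%N -> chain_coef i l =
  (r i l + \sum_(k : 'I_n | (i < k < l)%N) chain_coef i k * r k l) / (r i i - r l l).
Proof.
move=> il; rewrite /chain_coef big_ltn ?subn_gt0 // chain_sum0 big_add1 /=.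
under eq_bigr do rewrite chain_sumS.
rewrite exchange_big /= mulrDl mulr_suml; congr (_ + _).
apply: eq_bigr => k /andP[ik kl]; rewrite -big_distrl -mulrA /=; congr (_ * _).
rewrite (big_cat_nat (n := k - i)) /=; [|lia|lia].
rewrite [X in _ + X]big1_seq ?addr0 // => v /andP[_].
by rewrite mem_index_iota => /andP[kv _]; apply: chain_sum_eq0.
Qed.

Lemma b_formulaE (bd : 'I_n -> K) i l :
  (i < l)%N -> b_formula r bd i l = bd i * chain_coef i l.
Proof.
move=> il; rewrite /b_formula /chain_coef [in RHS]big_ltn ?subn_gt0 // chain_sum0.
congr (_ * (_ + _)); apply: eq_big_nat => -[|v] // _.
by apply: eq_bigr => t _; rewrite chain_termE.
Qed.

Hypothesis hr : upper_tri r.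
Hypothesis hdist : forall k l : 'I_n, k != l -> r k k != r l l.

Lemma eigenrow_chain_coef i (x : 'rV[K]_n) :
  (forall j : 'I_n, (j < i)%N -> x 0 j = 0) -> x 0 i = 1 -> x *m r = r i i *: x ->
  forall l : 'I_n, (i < l)%N -> x 0 l = chain_coef i l.
Proof.
move=> x_lt x_i x_eigen.
have x_rec l : (i < l)%N ->
    x 0 l = (r i l + \sum_(k : 'I_n | (i < k < l)%N) x 0 k * r k l) / (r i i - r l l).
  move=> il; have dl : r i i - r l l != 0 by rewrite subr_eq0 hdist // neq_ltn il.
  apply: (canRL (mulfK dl)); have /matrixP/(_ 0 l) := x_eigen; rewrite !mxE.
  rewrite (sum_ord_between il) => [|j /orP[ji|lj]]; last 2 first.
  - by rewrite x_lt ?mul0r.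
  - by rewrite hr ?mulr0.
  rewrite x_i mul1r => x_eigen_l.
  by rewrite mulrBr [x 0 l * r i i]mulrC -x_eigen_l; ring.
move=> l; elim: {l}_.+1 {-2}l (ltnSn l) => // m IH l lm il.
rewrite x_rec // chain_coef_rec //; congr ((_ + _) / _).
by apply: eq_bigr => k /andP[ik kl]; rewrite IH //; lia.
Qed.

End Chains.

Section Bmat.
Variables (K : fieldType) (n : nat) (r : 'M[K]_n) (bd : 'I_n -> K).

Lemma bmatE k l : bmat r bd k l = bd k * Lmat r k k l.
Proof.
rewrite /bmat summxE (bigD1 k) //= big1 ?addr0 => [|i ik].
  rewrite mul_mx_diag mxE (bigD1 k) //= big1 ?addr0 => [|j jk].
    by rewrite !mxE !eqxx mul1r.
  by rewrite !mxE (negPf jk) andbF !mul0r.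
by rewrite mul_mx_diag mxE big1 // => j _; rewrite !mxE (eq_sym k i) (negPf ik) !mul0r.
Qed.

Hypothesis hr : upper_tri r.

Lemma upper_tri_bmat : upper_tri (bmat r bd).
Proof. by move=> k l lk; rewrite bmatE upper_tri_Lmat ?mulr0. Qed.

Lemma bmat_mulmx : bmat r bd *m r = diag_mx (\row_k r k k) *m bmat r bd.
Proof.
apply/matrixP => k l; rewrite mul_diag_mx !mxE bmatE mulrCA.
have /matrixP/(_ k l) := Lmat_mulmx hr k; rewrite !mxE => <-.
by rewrite big_distrr; apply: eq_bigr => j _; rewrite bmatE -mulrA.
Qed.

Hypothesis hdist : forall k l : 'I_n, k != l -> r k k != r l l.

Lemma bmat_diag k : bmat r bd k k = bd k.
Proof. by rewrite bmatE Lmat_diag ?mulr1. Qed.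

Lemma bmat_unitmx : (forall k, bd k != 0) -> bmat r bd \in unitmx.
Proof.
move=> hb; rewrite unitmxE det_upper_tri ?unitfE; last exact: upper_tri_bmat.
by apply/prodf_neq0 => k _; rewrite bmat_diag.
Qed.

Lemma bmat_offdiag (k l : 'I_n) : (k < l)%N -> bmat r bd k l = b_formula r bd k l.
Proof.
move=> kl; rewrite bmatE b_formulaE //; congr (_ * _).
have -> : Lmat r k k l = row k (Lmat r k) 0 l by rewrite [RHS]mxE.
apply: (eigenrow_chain_coef hr hdist) => // [j jk||].
- by rewrite [LHS]mxE upper_tri_Lmat.
- by rewrite [LHS]mxE Lmat_diag.
- by rewrite -row_mul Lmat_mulmx // linearZ.
Qed.

End Bmat.

Theorem mainTheorem16 (R : realType) (n : nat) (r : 'M[R[i]]_n)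
  (bd : 'I_n -> R[i])
  (hr : upper_tri r)
  (hdist : forall k l : 'I_n, k != l -> r k k != r l l)
  (hb : forall k : 'I_n, bd k != 0) :
  let b := bmat r bd in
  [/\ upper_tri b, b \in unitmx, (forall k : 'I_n, b k k = bd k),
      b *m r *m invmx b = diag_mx (\row_k r k k)
    & forall k l : 'I_n, (k < l)%N -> b k l = b_formula r bd k l].
Proof.
move=> b; have b_unit : b \in unitmx by exact: bmat_unitmx.
split => //.
- exact: upper_tri_bmat.
- exact: bmat_diag.
- by rewrite bmat_mulmx // -mulmxA mulmxV ?mulmx1.
- exact: bmat_offdiag.
Qed.
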